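(* Let $c\ge0$, $d>0$, $\beta>0$, and let $\Delta_{q_\beta}$ denote the discriminant (in $\mu$) of $q_\beta(\mu):=\mu^4+2d\mu^3+(2c+d^2)\mu^2+d(\beta/2+2c)\mu+c(\beta+c)$, regarded as a function of $d$. Then: (i) For $\beta<4c$, $\Delta_{q_\beta}=0$ has a unique non-negative solution $d_1\in(0,2\sqrt{c})$; set $d_2=d_3=\infty$. (ii) For $4c\le\beta<8c$, $\Delta_{q_\beta}=0$ has the three non-negative solutions $d_1\in(0,2\sqrt{c})$, $d_2\in(2\sqrt{c},2\sqrt{\beta}]$ and $d_3\in[2\sqrt{\beta},\infty)$. (iii) For $\beta\ge8c>0$, $\Delta_{q_\beta}=0$ has two non-negative solutions $d_1\in(0,2\sqrt{c})$, $d_2\in(2\sqrt{c},2\sqrt{\beta}]$; set $d_3=\infty$. (iv) For $c=0$, $\Delta_{q_\beta}=0$ has two non-negative solutions $d_1=0$ and $d_2=\sqrt{27\beta/8}$; set $d_3=\infty$. (v) The polynomial $q_\beta$ has no real roots if $d<d_1$ and four real roots if $d_2\le d\le d_3$; in all other cases $q_\beta$ has two real roots. *)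

From HB Require Import structures.
From mathcomp Require Import all_boot all_order all_algebra.
From mathcomp Require Import polyrcf.
From mathcomp Require Import reals.
Set Implicit Arguments. Unset Strict Implicit. Unset Printing Implicit Defensive.
Import Order.TTheory GRing.Theory Num.Theory.
Local Open Scope ring_scope.

Definition disc (R : fieldType) (p : {poly R}) : R :=
  let n := (size p).-1 in
  (-1) ^+ (n * n.-1)./2 * (lead_coef p)^-1 * resultant p p^`().

Definition qbeta (R : fieldType) (c d beta : R) : {poly R} :=
  'X^4 + (2 * d) *: 'X^3 + (2 * c + d ^+ 2) *: 'X^2
  + (d * (beta / 2 + 2 * c)) *: 'X + (c * (beta + c))%:P.

Definition Delta_q (R : fieldType) (c beta d : R) : R := disc (qbeta c d beta).

Definition nreal_roots (R : rcfType) (p : {poly R}) : nat :=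
  (\sum_(x <- rootsR p) mup x p)%N.

From HB Require Import structures.
From mathcomp Require Import all_boot all_order all_algebra.
From mathcomp Require Import polyrcf.
From mathcomp Require Import reals.
From mathcomp Require Import ring lra.
Import Order.TTheory GRing.Theory Num.Theory.
Local Open Scope ring_scope.

(* Over a real closed field the quartic q_beta splits into two real monic
   quadratics x^2 + a_i x + b_i: w = (a1 - a2)^2 / 4 is a positive root of the
   resolvent cubic.  The discriminant of such a product is D1 * D2 * Res^2, with
   D_i = a_i^2 - 4 b_i and Res the resultant of the two factors, and Res can
   only vanish when the factors coincide, which d, beta > 0 exclude.  Hence
   Delta < 0 means that exactly one factor has real roots (two real roots),
   while for Delta > 0 there are none or four: Newton's inequality forbids four
   real roots when d^2 < 4c, and q_beta takes negative values when d^2 > 4c.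
   Finally Delta = beta^2 G(d^2 - 4c) for an explicit cubic G, whose roots are
   located, case by case, from its values at -4c, 0 and 4 beta - 4c. *)

Section RealRoots.
Context {R : rcfType}.
Implicit Types (p q : {poly R}) (s : seq R) (a x : R).

Lemma mem_rootsR p x : p != 0 -> (x \in rootsR p) = root p x.
Proof. by move=> p0; rewrite -(roots_on_rootsR p0 x). Qed.

Lemma nreal_rootsE [p s] : p != 0 -> uniq s -> (forall x, root p x -> x \in s) ->
  nreal_roots p = (\sum_(x <- s) mup x p)%N.
Proof.
move=> p0 us sub; rewrite (bigID (root p)) /= [X in (_ + X)%N]big1 ?addn0; last first.
  by move=> x /mupNroot.
rewrite -big_filter /nreal_roots; apply/perm_big/uniq_perm.
- exact: uniq_roots.
- exact: filter_uniq.
move=> x; rewrite mem_rootsR // mem_filter.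
by apply/idP/andP => [rx | [] //]; split; last exact: sub.
Qed.

Lemma nreal_rootsM p q : p * q != 0 ->
  nreal_roots (p * q) = (nreal_roots p + nreal_roots q)%N.
Proof.
move=> pq0; have [p0 q0] : p != 0 /\ q != 0 by move: pq0; rewrite mulf_eq0 negb_or => /andP.
have Upq : uniq (rootsR (p * q)) := uniq_roots _ _ _.
rewrite (nreal_rootsE pq0 Upq) => [|x]; last by rewrite mem_rootsR.
rewrite (nreal_rootsE p0 Upq) => [|x px]; last by rewrite mem_rootsR // rootM px.
rewrite (nreal_rootsE q0 Upq) => [|x qx]; last by rewrite mem_rootsR // rootM qx orbT.
by rewrite -big_split; apply: eq_bigr => x _; rewrite mupM.
Qed.

Lemma nreal_roots_XsubC a : nreal_roots ('X - a%:P) = 1%N.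
Proof.
rewrite (@nreal_rootsE _ [:: a]) ?polyXsubC_eq0 // => [|x]; last by rewrite root_XsubC inE.
by rewrite big_seq1 -[X in mup _ X]expr1 mup_XsubCX eqxx.
Qed.

Lemma nreal_roots_noroot p : (forall x, ~~ root p x) -> nreal_roots p = 0%N.
Proof.
move=> nr; have p0 : p != 0 by apply: contraNneq (nr 0) => ->; rewrite root0.
by rewrite (@nreal_rootsE _ [::]) ?big_nil // => x; rewrite (negbTE (nr x)).
Qed.

End RealRoots.

Definition quad {R : nzRingType} (a b : R) : {poly R} := 'X^2 + a *: 'X + b%:P.

Definition quartic {R : nzRingType} (A B C E : R) : {poly R} :=
  'X^4 + A *: 'X^3 + B *: 'X^2 + C *: 'X + E%:P.

Section QuadraticAndQuartic.
Context {R : nzRingType}.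
Implicit Types a b A B C E : R.

Lemma quadE a b : quad a b = Poly [:: b; a; 1].
Proof.
apply/polyP => i; rewrite coef_Poly /quad !coefE.
by case: i => [|[|[|i]]] /=; rewrite ?(mulr0, mulr1, addr0, add0r) ?nth_nil.
Qed.

Lemma coef_quad a b i : (quad a b)`_i = [:: b; a; 1]`_i.
Proof. by rewrite quadE coef_Poly. Qed.

Lemma size_quad a b : size (quad a b) = 3%N.
Proof. by rewrite quadE (@PolyK _ 0) ?oner_neq0. Qed.

Lemma monic_quad a b : quad a b \is monic.
Proof. by rewrite monicE lead_coefE size_quad coef_quad. Qed.

Lemma quarticE A B C E : quartic A B C E = Poly [:: E; C; B; A; 1].
Proof.
apply/polyP => i; rewrite coef_Poly /quartic !coefE.
by case: i => [|[|[|[|[|i]]]]] /=; rewrite ?(mulr0, mulr1, addr0, add0r) ?nth_nil.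
Qed.

Lemma coef_quartic A B C E i : (quartic A B C E)`_i = [:: E; C; B; A; 1]`_i.
Proof. by rewrite quarticE coef_Poly. Qed.

Lemma size_quartic A B C E : size (quartic A B C E) = 5%N.
Proof. by rewrite quarticE (@PolyK _ 0) ?oner_neq0. Qed.

Lemma monic_Poly_rcons1 (s : seq R) : Poly (rcons s 1) \is monic.
Proof.
rewrite monicE /lead_coef (@PolyK _ 0) ?last_rcons ?oner_neq0 //.
by rewrite size_rcons /= nth_rcons ltnn eqxx.
Qed.

End QuadraticAndQuartic.

Lemma mul_quad {R : comNzRingType} (a1 b1 a2 b2 : R) :
  quad a1 b1 * quad a2 b2 =
  quartic (a1 + a2) (b1 + b2 + a1 * a2) (a1 * b2 + a2 * b1) (b1 * b2).
Proof. by rewrite /quad /quartic -!mul_polyC !(polyCD, polyCM); ring. Qed.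

Lemma nreal_roots_quad {R : rcfType} (a b : R) :
  nreal_roots (quad a b) = if 0 <= a ^+ 2 - 4 * b then 2%N else 0%N.
Proof.
have [sq mq] := (size_quad a b, monic_quad a b).
case: ifPn => [D_ge0 | /negbTE D_lt0].
  rewrite (Pdeg2.RealMonic.deg2_poly_factor sq mq) ?coef_quad //.
  by rewrite nreal_rootsM ?nreal_roots_XsubC // mulf_neq0 ?polyXsubC_eq0.
apply/nreal_roots_noroot/(Pdeg2.RealMonic.deg2_poly_noroot sq mq).
by rewrite !coef_quad /= ltNge D_lt0.
Qed.

Lemma quad_neg_disc_gt0 {R : realFieldType} (a b x : R) :
  (quad a b).[x] < 0 -> 0 < a ^+ 2 - 4 * b.
Proof.
rewrite /quad !hornerE => qx; have := sqr_ge0 (2 * x + a).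
have -> : (2 * x + a) ^+ 2 = 4 * (x ^+ 2 + a * x + b) + (a ^+ 2 - 4 * b) by ring.
lra.
Qed.

(** * Splitting a real quartic into two quadratics *)

Lemma monic_pos_root {R : rcfType} [p : {poly R}] : p \is monic -> p.[0] < 0 ->
  exists2 x : R, 0 < x & root p x.
Proof.
move=> /monicP lp1 p0_lt0.
have [n pn_ge1] : exists n, forall x, n <= x -> lead_coef p <= p.[x].
  by apply: poly_pinfty_gt_lc; rewrite lp1 ltr01.
pose M := Num.max n 1; have M_gt0 : 0 < M by rewrite lt_max ltr01 orbT.
have pM_gt0 : 0 < p.[M].
  by apply: lt_le_trans (pn_ge1 _ _); rewrite ?lp1 ?ltr01 ?le_max ?lexx.
have sgn : p.[0] * p.[M] < 0 by rewrite pmulr_llt0.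
by have [x /andP[x_gt0 _] rx] := poly_ivtoo (ltW M_gt0) sgn; exists x.
Qed.

Section QuarticSplit.
Context {R : rcfType}.
Variables A B C E : R.

Definition quad_split (a1 b1 a2 b2 : R) : Prop :=
  [/\ A = a1 + a2, B = b1 + b2 + a1 * a2, C = a1 * b2 + a2 * b1 & E = b1 * b2].

Let S0 := B - A ^+ 2 / 4.
Let q0 := C - A * S0 / 2.

(* With a1, a2 = A/2 +- u and b1, b2 = (S -+ t)/2, where S = S0 + u^2, the
   system [quad_split] reduces to the two equations below. *)
Let quad_split_of (u t : R) : u * t = q0 - A * u ^+ 2 / 2 ->
  t ^+ 2 = (S0 + u ^+ 2) ^+ 2 - 4 * E -> exists a1 b1 a2 b2, quad_split a1 b1 a2 b2.
Proof.
move=> ut tt; exists (A / 2 + u), ((S0 + u ^+ 2 - t) / 2), (A / 2 - u), ((S0 + u ^+ 2 + t) / 2).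
split; [by rewrite /S0; field | by rewrite /S0; field | | ].
- transitivity (A * (S0 + u ^+ 2) / 2 + u * t); last by field.
  by rewrite ut /q0 /S0; field.
- transitivity (((S0 + u ^+ 2) ^+ 2 - t ^+ 2) / 4); last by field.
  by rewrite tt; field.
Qed.

Let quad_split_of_resolvent [w : R] : 0 < w ->
  w * ((S0 + w) ^+ 2 - 4 * E) = (q0 - A * w / 2) ^+ 2 ->
  exists a1 b1 a2 b2, quad_split a1 b1 a2 b2.
Proof.
move=> w_gt0 fw; have u_neq0 : Num.sqrt w != 0 by rewrite gt_eqF ?sqrtr_gt0.
apply: (quad_split_of (Num.sqrt w) ((q0 - A * w / 2) / Num.sqrt w)).
  by rewrite sqr_sqrtr ?ltW //; field.
by rewrite expr_div_n sqr_sqrtr ?ltW // -fw; field; rewrite gt_eqF.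
Qed.

Lemma quartic_split_quad : exists a1 b1 a2 b2, quad_split a1 b1 a2 b2.
Proof.
have [q0_eq0 | q0_neq0] := eqVneq q0 0; last first.
  pose f := Poly (rcons [:: - q0 ^+ 2; S0 ^+ 2 - 4 * E + A * q0; 2 * S0 - A ^+ 2 / 4] 1).
  have [|w w_gt0 /rootP] := monic_pos_root (monic_Poly_rcons1 _ : f \is monic).
    by rewrite horner_Poly /= !mulr0 !add0r oppr_lt0 lt_def sqrf_eq0 q0_neq0 sqr_ge0.
  rewrite horner_Poly /= => fw; apply: (quad_split_of_resolvent w_gt0).
  by apply: subr0_eq; rewrite -fw; field.
have [D_ge0 | D_lt0] := lerP 0 (S0 ^+ 2 - 4 * E).
  apply: (quad_split_of 0 (Num.sqrt (S0 ^+ 2 - 4 * E))); last by rewrite sqr_sqrtr //; field.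
  by rewrite q0_eq0; field.
pose g := Poly (rcons [:: S0 ^+ 2 - 4 * E; 2 * S0 - A ^+ 2 / 4] 1).
have [|w w_gt0 /rootP] := monic_pos_root (monic_Poly_rcons1 _ : g \is monic).
  by rewrite horner_Poly /= !mulr0 !add0r.
rewrite horner_Poly /= => gw; apply: (quad_split_of_resolvent w_gt0).
by apply: subr0_eq; rewrite -(mulr0 w) -gw q0_eq0; field.
Qed.

End QuarticSplit.

(** * The discriminant of a quartic *)

Lemma lebE (m n : nat) : Nat.leb m n = (m <= n)%N.
Proof. by elim: m n => [|m IH] [|n] //=; rewrite IH. Qed.

(* [det_laplace n f] expands the determinant of the n x n matrix with entries
   [odflt 0 (f i j)] along its first row.  [None] marks a structural zero, so
   that no minor is expanded for it, and the index arithmetic uses [Nat.leb] and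
   [Nat.sub], which, unlike ssrnat's [leq] and [subn], reduce under [simpl]:
   on a concrete sparse matrix [simpl] computes the expansion. *)
Section LaplaceExpansion.
Context {R : comNzRingType}.
Implicit Type f : nat -> nat -> option R.

Definition laplace_minor f (j : nat) : nat -> nat -> option R :=
  fun i k => f i.+1 (if Nat.leb j k then k.+1 else k).

Fixpoint det_laplace (n : nat) f : R :=
  if n is n'.+1 then
    foldr (fun j acc => if f 0%N j is Some a
                        then (-1) ^+ j * a * det_laplace n' (laplace_minor f j) + acc
                        else acc) 0 (iota 0 n)
  else 1.

Lemma foldr_option_sum (s : seq nat) (a : nat -> option R) (g : nat -> R -> R) :
  foldr (fun j acc => if a j is Some x then g j x + acc else acc) 0 s =
  \sum_(j <- s) (if a j is Some x then g j x else 0).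
Proof.
by elim: s => [|j s IH]; rewrite ?big_nil // big_cons /= IH; case: (a j); rewrite ?add0r.
Qed.

Lemma det_laplaceS n f : det_laplace n.+1 f = \sum_(0 <= j < n.+1)
  if f 0%N j is Some a then (-1) ^+ j * a * det_laplace n (laplace_minor f j) else 0.
Proof. by rewrite /index_iota subn0 -foldr_option_sum. Qed.

Lemma det_laplaceE n f : \det (\matrix_(i < n, j < n) odflt 0 (f i j)) = det_laplace n f.
Proof.
elim: n f => [|n IH] f; first by rewrite det_mx00.
rewrite (expand_det_row _ ord0) det_laplaceS big_mkord; apply: eq_bigr => j _.
rewrite mxE /cofactor add0n -IH; case: (f 0%N j) => [a|] /=; last by rewrite mul0r.
rewrite mulrCA mulrA; congr (_ * \det _); apply/matrixP => i k.
rewrite !mxE /laplace_minor lebE /= /bump leq0n add1n.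
by case: leqP; rewrite ?add1n ?add0n.
Qed.

End LaplaceExpansion.

Section SylvesterEntries.
Context {R : comNzRingType}.
Implicit Types p q r : {poly R}.

Definition sylvester_band (d : nat) r (k j : nat) : option R :=
  if Nat.leb k j && Nat.leb (Nat.sub j k) d then Some r`_(Nat.sub j k) else None.

Definition sylvester_entries (dp dq : nat) p q (i j : nat) : option R :=
  if Nat.ltb i dq then sylvester_band dp p i j else sylvester_band dq q (Nat.sub i dq) j.

Lemma sylvester_bandE d r k j : size r = d.+1 ->
  odflt 0 (sylvester_band d r k j) = r`_(j - k) *+ (k <= j).
Proof.
move=> sr; rewrite /sylvester_band !lebE; case: (k <= j)%N; rewrite ?mulr0n ?mulr1n //=.
by case: leqP => //= ltdj; rewrite nth_default // sr.
Qed.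

Lemma resultant_laplace [dp dq p q] : size p = dp.+1 -> size q = dq.+1 ->
  resultant p q = det_laplace (dq + dp)%N (sylvester_entries dp dq p q).
Proof.
move=> sp sq; rewrite /resultant -det_laplaceE; have := @Sylvester_mxE _ p q.
move: (Sylvester_mx p q); rewrite sp sq /= => S SE; congr (\det _); apply/matrixP => i j.
rewrite SE mxE /sylvester_entries /Nat.ltb lebE; case: splitP => k ->.
  by rewrite sylvester_bandE.
have -> : Nat.sub (dq + k)%N dq = k by exact: addKn.
by rewrite sylvester_bandE.
Qed.

End SylvesterEntries.

Definition disc4 {R : comNzRingType} (b c d e : R) : R :=
  256*e^+3 - 192*b*d*e^+2 - 128*c^+2*e^+2 + 144*c*d^+2*e - 27*d^+4 + 144*b^+2*c*e^+2
  - 6*b^+2*d^+2*e - 80*b*c^+2*d*e + 18*b*c*d^+3 + 16*c^+4*e - 4*c^+3*d^+2 - 27*b^+4*e^+2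
  + 18*b^+3*c*d*e - 4*b^+3*d^+3 - 4*b^+2*c^+3*e + b^+2*c^+2*d^+2.

Lemma disc_quartic {R : numFieldType} (A B C E : R) :
  disc (quartic A B C E) = disc4 A B C E.
Proof.
have sp := size_quartic A B C E; have p4 : (quartic A B C E)`_4 = 1 by rewrite coef_quartic.
have sp' : size (quartic A B C E)^`() = 4%N.
  apply/anti_leq/andP; split.
    by have := lt_size_deriv (p := quartic A B C E); rewrite sp; apply; rewrite -size_poly_gt0 sp.
  rewrite ltnNge; apply/negP => /leq_sizeP/(_ 3%N (leqnn 3))/eqP.
  by rewrite coef_deriv p4 pnatr_eq0.
rewrite /disc sp /lead_coef sp p4 invr1 (resultant_laplace sp sp').
rewrite /det_laplace /laplace_minor /sylvester_entries /sylvester_band /=.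
by rewrite !coef_deriv !coef_quartic /disc4 /=; ring.
Qed.

Definition res_quad {R : nzRingType} (a1 b1 a2 b2 : R) : R :=
  (b1 - b2) ^+ 2 - a1 * (a1 - a2) * (b1 - b2) + b1 * (a1 - a2) ^+ 2.

Lemma disc4_mul_quad {R : comNzRingType} (a1 b1 a2 b2 : R) :
  disc4 (a1 + a2) (b1 + b2 + a1 * a2) (a1 * b2 + a2 * b1) (b1 * b2) =
  (a1 ^+ 2 - 4 * b1) * (a2 ^+ 2 - 4 * b2) * res_quad a1 b1 a2 b2 ^+ 2.
Proof. by rewrite /disc4 /res_quad; ring. Qed.

Lemma res_quadC {R : comNzRingType} (a1 b1 a2 b2 : R) :
  res_quad a1 b1 a2 b2 = res_quad a2 b2 a1 b1.
Proof. by rewrite /res_quad; ring. Qed.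

Lemma res_quad_eq0 {R : realFieldType} (a1 b1 a2 b2 : R) : a1 ^+ 2 - 4 * b1 < 0 ->
  res_quad a1 b1 a2 b2 = 0 -> a1 = a2 /\ b1 = b2.
Proof.
move=> D1_lt0 res0.
have sos : 4 * res_quad a1 b1 a2 b2 =
    (2 * (b1 - b2) - a1 * (a1 - a2)) ^+ 2 + (a1 - a2) ^+ 2 * (4 * b1 - a1 ^+ 2).
  by rewrite /res_quad; ring.
have sq1 := sqr_ge0 (2 * (b1 - b2) - a1 * (a1 - a2)); have sq2 := sqr_ge0 (a1 - a2).
have a12 : a1 - a2 = 0 by apply/eqP; rewrite -sqrf_eq0 eq_le sq2 andbT; nra.
have b12 : b1 - b2 = 0 by move: sos; rewrite res0 a12; nra.
by split; apply/eqP; rewrite -subr_eq0 ?a12 ?b12.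
Qed.

Lemma nreal_roots_mul_quad {R : rcfType} [a1 b1 a2 b2 : R] :
  let D1 := a1 ^+ 2 - 4 * b1 in let D2 := a2 ^+ 2 - 4 * b2 in
  let r := res_quad a1 b1 a2 b2 in let n := nreal_roots (quad a1 b1 * quad a2 b2) in
  (D1 < 0 \/ D2 < 0 -> r != 0) ->
  [/\ D1 < 0 \/ D2 < 0 -> 0 < D1 * D2 * r ^+ 2 -> n = 0%N,
      D1 < 0 \/ D2 < 0 -> D1 * D2 * r ^+ 2 <= 0 -> n = 2%N,
      D1 * D2 * r ^+ 2 < 0 -> n = 2%N &
      0 < D1 \/ 0 < D2 -> 0 <= D1 * D2 * r ^+ 2 -> n = 4%N].
Proof.
move=> D1 D2 r n r_neq0; have r2_ge0 := sqr_ge0 r.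
have r2_gt0 : D1 < 0 \/ D2 < 0 -> 0 < r ^+ 2.
  by move/r_neq0; rewrite lt_def sqrf_eq0 sqr_ge0 andbT.
rewrite /n nreal_rootsM ?mulf_neq0 ?monic_neq0 ?monic_quad // !nreal_roots_quad -/D1 -/D2.
case: (leP 0 D1) => h1; case: (leP 0 D2) => h2.
- split=> // [[] // | [] // | H]; exfalso.
  by have := mulr_ge0 (mulr_ge0 h1 h2) r2_ge0; lra.
- have r2 := r2_gt0 (or_intror h2); split=> //.
  + by move=> _; rewrite pmulr_lgt0 // => H; exfalso; nra.
  + by case=> ?; rewrite pmulr_lge0 // => H; exfalso; nra.
- have r2 := r2_gt0 (or_introl h1); split=> //.
  + by move=> _; rewrite pmulr_lgt0 // => H; exfalso; nra.
  + by case=> ?; rewrite pmulr_lge0 // => H; exfalso; nra.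
- have r2 := r2_gt0 (or_introl h1); split=> //.
  + by move=> _; rewrite pmulr_lle0 // => H; exfalso; nra.
  + by rewrite pmulr_llt0 // => H; exfalso; nra.
  + by case=> ?; exfalso; lra.
Qed.

Lemma qbetaE {R : fieldType} (c d beta : R) :
  qbeta c d beta = quartic (2 * d) (2 * c + d ^+ 2) (d * (beta / 2 + 2 * c)) (c * (beta + c)).
Proof. by []. Qed.

Section QbetaRealRoots.
Context {R : rcfType}.
Variables c d beta : R.
Hypotheses (d_gt0 : 0 < d) (beta_gt0 : 0 < beta).

Lemma horner_qbeta x :
  (qbeta c d beta).[x] = (x ^+ 2 + d * x + c) ^+ 2 + beta * (d * x / 2 + c).
Proof. by rewrite /qbeta !(hornerD, hornerZ, hornerXn, hornerX, hornerC); field. Qed.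

Lemma qbeta_neg_value : 4 * c < d ^+ 2 -> exists x, (qbeta c d beta).[x] < 0.
Proof.
move=> lt4c; pose S := Num.sqrt (d ^+ 2 - 4 * c).
have S2 : S ^+ 2 = d ^+ 2 - 4 * c by rewrite sqr_sqrtr // subr_ge0 ltW.
have S_gt0 : 0 < S by rewrite sqrtr_gt0 subr_gt0.
have cE : c = (d ^+ 2 - S ^+ 2) / 4 by rewrite S2; field.
exists ((- d - S) / 2); rewrite horner_qbeta cE.
have -> : ((- d - S) / 2) ^+ 2 + d * ((- d - S) / 2) + (d ^+ 2 - S ^+ 2) / 4 = 0 by field.
have -> : d * ((- d - S) / 2) / 2 + (d ^+ 2 - S ^+ 2) / 4 = - (d * S + S ^+ 2) / 4 by field.
have : 0 < d * S + S ^+ 2 by rewrite addr_gt0 ?mulr_gt0 ?exprn_gt0.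
by rewrite expr0n /= add0r pmulr_rlt0 //; lra.
Qed.

Lemma qbeta_split_quad : exists a1 b1 a2 b2,
  let D1 := a1 ^+ 2 - 4 * b1 in let D2 := a2 ^+ 2 - 4 * b2 in
  [/\ qbeta c d beta = quad a1 b1 * quad a2 b2,
      Delta_q c beta d = D1 * D2 * res_quad a1 b1 a2 b2 ^+ 2,
      D1 < 0 \/ D2 < 0 -> res_quad a1 b1 a2 b2 != 0,
      d ^+ 2 < 4 * c -> D1 < 0 \/ D2 < 0 &
      4 * c < d ^+ 2 -> 0 < D1 \/ 0 < D2].
Proof.
have [a1 [b1 [a2 [b2 [eA eB eC eE]]]]] :=
  quartic_split_quad (2 * d) (2 * c + d ^+ 2) (d * (beta / 2 + 2 * c)) (c * (beta + c)).
have qE : qbeta c d beta = quad a1 b1 * quad a2 b2 by rewrite qbetaE eA eB eC eE mul_quad.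
exists a1, b1, a2, b2; split=> //.
- by rewrite /Delta_q qbetaE disc_quartic eA eB eC eE disc4_mul_quad.
- move=> D_neg; apply/eqP => r0; have [ea eb] : a1 = a2 /\ b1 = b2.
    case: D_neg => [D1_lt0 | D2_lt0]; first exact: res_quad_eq0.
    by have [|-> ->] := res_quad_eq0 a2 b2 a1 b1 D2_lt0; first rewrite res_quadC.
  move: eA eB eC; rewrite -ea -eb => eA eB eC.
  have a1d : a1 = d by lra.
  have b1c : b1 = c by move: eB; rewrite a1d -expr2; lra.
  have : d * beta = 2 * (d * (beta / 2 + 2 * c) - (a1 * b1 + a1 * b1)) by rewrite a1d b1c; field.
  by rewrite -eC subrr mulr0 => /eqP; rewrite mulf_eq0 !gt_eqF.
- have newton : (a1 - a2) ^+ 2 + 2 * (a1 ^+ 2 - 4 * b1) + 2 * (a2 ^+ 2 - 4 * b2) =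
      4 * d ^+ 2 - 16 * c.
    transitivity (3 * (2 * d) ^+ 2 - 8 * (2 * c + d ^+ 2)); last by ring.
    by rewrite eA eB; ring.
  move=> lt4c; have := sqr_ge0 (a1 - a2).
  by case: (ltP (a1 ^+ 2 - 4 * b1) 0) => D1 sq; [left | right; lra].
move=> /qbeta_neg_value [x]; rewrite qE hornerM => neg.
case: (ltP (quad a1 b1).[x] 0) => [/quad_neg_disc_gt0 | q1_ge0]; first by left.
right; apply: (quad_neg_disc_gt0 _ _ x); rewrite ltNge.
by apply: contraTN neg => q2_ge0; rewrite -leNgt mulr_ge0.
Qed.

Lemma nreal_roots_qbeta_disc :
  [/\ d ^+ 2 < 4 * c -> 0 < Delta_q c beta d -> nreal_roots (qbeta c d beta) = 0%N,
      d ^+ 2 < 4 * c -> Delta_q c beta d <= 0 -> nreal_roots (qbeta c d beta) = 2%N,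
      Delta_q c beta d < 0 -> nreal_roots (qbeta c d beta) = 2%N &
      4 * c < d ^+ 2 -> 0 <= Delta_q c beta d -> nreal_roots (qbeta c d beta) = 4%N].
Proof.
have [a1 [b1 [a2 [b2 /= [qE DE r_neq0 newton some_pos]]]]] := qbeta_split_quad.
have [n0 n2 n2' n4] := nreal_roots_mul_quad r_neq0.
by rewrite qE DE; split=> [/newton/n0 | /newton/n2 | /n2' | /some_pos/n4].
Qed.

End QbetaRealRoots.

(** * The discriminant as a cubic in y = d^2 - 4c *)

Definition rdisc {R : fieldType} (c beta : R) : {poly R} :=
  (beta / 2 - 4 * c) *: 'X^3 + (18 * beta * c - 27 * beta ^+ 2 / 16) *: 'X^2
  - (27 / 2 * beta ^+ 2 * c) *: 'X - (27 * beta ^+ 2 * c ^+ 2)%:P.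

Lemma horner_rdisc {R : fieldType} (c beta y : R) : (rdisc c beta).[y] =
  (beta / 2 - 4 * c) * y ^+ 3 + (18 * beta * c - 27 * beta ^+ 2 / 16) * y ^+ 2
  - 27 / 2 * beta ^+ 2 * c * y - 27 * beta ^+ 2 * c ^+ 2.
Proof. by rewrite /rdisc !(hornerD, hornerN, hornerZ, hornerXn, hornerX, hornerC). Qed.

Lemma Delta_qE {R : numFieldType} (c beta d : R) :
  Delta_q c beta d = beta ^+ 2 * (rdisc c beta).[d ^+ 2 - 4 * c].
Proof. by rewrite /Delta_q qbetaE disc_quartic horner_rdisc /disc4; field. Qed.

Lemma rdisc_c0 {R : fieldType} (beta y : R) :
  (rdisc 0 beta).[y] = y ^+ 2 * (beta / 2 * y - 27 * beta ^+ 2 / 16).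
Proof. by rewrite horner_rdisc; ring. Qed.

Lemma cubic_factor2 {R : fieldType} [a b c d y1 y2 : R] : y1 != y2 ->
  a * y1 ^+ 3 + b * y1 ^+ 2 + c * y1 + d = 0 -> a * y2 ^+ 3 + b * y2 ^+ 2 + c * y2 + d = 0 ->
  forall y, a * y ^+ 3 + b * y ^+ 2 + c * y + d =
            (y - y1) * (y - y2) * (a * y + (b + a * (y1 + y2))).
Proof.
move=> y12 root1 root2; pose e := b + a * (y1 + y2).
pose u := c - a * y1 * y2 + e * (y1 + y2); pose w := d - e * y1 * y2.
have rem y : a * y ^+ 3 + b * y ^+ 2 + c * y + d =
    (y - y1) * (y - y2) * (a * y + (b + a * (y1 + y2))) + (u * y + w).
  by rewrite /u /w /e; ring.
have w1 : u * y1 + w = 0 by rewrite -root1 rem subrr !mul0r add0r.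
have w2 : u * y2 + w = 0 by rewrite -root2 rem subrr mulr0 mul0r add0r.
have u0 : u = 0.
  have : u * (y1 - y2) = (u * y1 + w) - (u * y2 + w) by ring.
  by rewrite w1 w2 subrr => /eqP; rewrite mulf_eq0 subr_eq0 (negbTE y12) orbF => /eqP.
have w0 : w = 0 by rewrite -w1 u0 mul0r add0r.
by move=> y; rewrite rem u0 w0 mul0r !addr0.
Qed.

Section ReducedDiscriminant.
Context {R : rcfType} {c beta : R}.
Local Notation G := (horner (rdisc c beta)).

Lemma rdisc_at_m4c : G (- (4 * c)) = 256 * c ^+ 3 * (beta + c).
Proof. by rewrite horner_rdisc; field. Qed.

Lemma rdisc_at0 : G 0 = - (27 * beta ^+ 2 * c ^+ 2).
Proof. by rewrite horner_rdisc; field. Qed.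

Lemma rdisc_at_4b : G (4 * beta - 4 * c) = (beta - 4 * c) ^+ 3 * (5 * beta - 4 * c).
Proof. by rewrite horner_rdisc; field. Qed.

Lemma rdisc_4c y : (rdisc c (4 * c)).[y] = - c * (y - 12 * c) ^+ 2 * (2 * y + 3 * c).
Proof. by rewrite horner_rdisc; field. Qed.

Lemma rdisc_expand_4c y : G y = (rdisc c (4 * c)).[y]
  + (beta - 4 * c) * (y - 12 * c) * (y ^+ 2 + 21 * c * y + 36 * c ^+ 2) / 2
  - 27 * (4 * c + y) ^+ 2 * (beta - 4 * c) ^+ 2 / 16.
Proof. by rewrite !horner_rdisc; field. Qed.

Lemma rdisc_sos y : 27 * (4 * c + y) ^+ 2 / 4 * - G y =
  (27 * (4 * c + y) ^+ 2 / 8 * beta - y ^+ 2 * (y + 36 * c) / 2) ^+ 2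
  + y ^+ 3 * (12 * c - y) ^+ 3 / 4.
Proof. by rewrite horner_rdisc; field. Qed.

Lemma rdisc_m4c_gt0 : 0 < c -> 0 < beta -> 0 < G (- (4 * c)).
Proof.
move=> c_gt0 beta_gt0; rewrite rdisc_at_m4c.
by apply: mulr_gt0; [apply: mulr_gt0; [lra | exact: exprn_gt0] | lra].
Qed.

Lemma rdisc0_lt0 : 0 < c -> 0 < beta -> G 0 < 0.
Proof.
move=> c_gt0 beta_gt0; rewrite rdisc_at0 oppr_lt0.
by apply: mulr_gt0; [apply: mulr_gt0; [lra | exact: exprn_gt0] | exact: exprn_gt0].
Qed.

Lemma rdisc_4b_gt0 : 0 < c -> 4 * c < beta -> 0 < G (4 * beta - 4 * c).
Proof.
by move=> c_gt0 lt4c; rewrite rdisc_at_4b; apply: mulr_gt0; [apply: exprn_gt0 |]; lra.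
Qed.

Lemma rdisc_decr (a b : R) : 0 < c -> 0 < beta ->
  - (4 * c) <= a -> a < b -> b <= 0 -> G b < G a.
Proof.
move=> c_gt0 beta_gt0 ha hab hb; pose u := - a; pose v := - b.
have E : G a - G b = (b - a) * ((4 * c - beta / 2) * (u ^+ 2 + u * v + v ^+ 2)
    + (18 * beta * c - 27 * beta ^+ 2 / 16) * (u + v) + 27 / 2 * beta ^+ 2 * c).
  by rewrite !horner_rdisc /u /v; field.
have [u_ge0 v_ge0 u_le v_le] : [/\ 0 <= u, 0 <= v, u <= 4 * c & v <= 4 * c].
  by rewrite /u /v; split; lra.
have uv_gt0 : 0 < u + v by rewrite /u /v; lra.
clearbody u v.
have S_le : u ^+ 2 + u * v + v ^+ 2 <= 8 * c * (u + v).
  have : 0 <= u * (4 * c - u) by rewrite mulr_ge0 // subr_ge0.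
  have : 0 <= v * (4 * c - v) by rewrite mulr_ge0 // subr_ge0.
  have : 0 <= u * (4 * c - v) by rewrite mulr_ge0 // subr_ge0.
  have : 0 <= c * v by rewrite mulr_ge0 // ltW.
  lra.
have S_ge0 : 0 <= u ^+ 2 + u * v + v ^+ 2 by nra.
have b2_le : beta ^+ 2 * (u + v) <= 8 * beta ^+ 2 * c by have := sqr_ge0 beta; nra.
have h1 : 0 <= beta * (8 * c * (u + v) - (u ^+ 2 + u * v + v ^+ 2)).
  by rewrite mulr_ge0 ?subr_ge0 // ltW.
have h2 := mulr_ge0 (ltW c_gt0) S_ge0.
have h3 : 0 < beta * c * (u + v) by rewrite !mulr_gt0.
suff : 0 < G a - G b by lra.
by rewrite E mulr_gt0 ?subr_gt0 //; lra.
Qed.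

(* Below 12c complete the square in beta; from 12c on, expand around beta = 4c. *)
Lemma rdisc_neg_lt4c (y : R) : 0 < beta -> beta < 4 * c -> 0 < y -> G y < 0.
Proof.
move=> beta_gt0 lt4c y_gt0; have c_gt0 : 0 < c by lra.
have y3_gt0 : 0 < y ^+ 3 by rewrite exprn_gt0.
have [lt12c | ge12c] := ltP y (12 * c).
  have k_gt0 : 0 < 27 * (4 * c + y) ^+ 2 / 4 by rewrite divr_gt0 ?mulr_gt0 ?exprn_gt0 //; lra.
  have h1 : 0 < y ^+ 3 * (12 * c - y) ^+ 3 / 4.
    by rewrite divr_gt0 ?mulr_gt0 ?exprn_gt0 //; lra.
  have h2 := sqr_ge0 (27 * (4 * c + y) ^+ 2 / 8 * beta - y ^+ 2 * (y + 36 * c) / 2).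
  by rewrite -oppr_gt0 -(pmulr_rgt0 _ k_gt0) rdisc_sos; lra.
rewrite rdisc_expand_4c rdisc_4c.
have t1 : 0 <= c * (y - 12 * c) ^+ 2 * (2 * y + 3 * c).
  by apply: mulr_ge0; [apply: mulr_ge0; [exact: ltW | exact: sqr_ge0] | lra].
have t2 : 0 <= (4 * c - beta) * (y - 12 * c) * (y ^+ 2 + 21 * c * y + 36 * c ^+ 2).
  by apply: mulr_ge0; [apply: mulr_ge0; lra | nra].
have t3 : 0 < 27 * (4 * c + y) ^+ 2 * (4 * c - beta) ^+ 2.
  by apply: mulr_gt0; [apply: mulr_gt0; [lra | apply: exprn_gt0; lra] | apply: exprn_gt0; lra].
lra.
Qed.

Lemma rdisc_factor2 [y1 y2 : R] : y1 != y2 -> G y1 = 0 -> G y2 = 0 -> forall y,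
  G y = (y - y1) * (y - y2) * ((beta / 2 - 4 * c) * y
          + (18 * beta * c - 27 * beta ^+ 2 / 16 + (beta / 2 - 4 * c) * (y1 + y2))).
Proof.
have cubic y : G y = (beta / 2 - 4 * c) * y ^+ 3 + (18 * beta * c - 27 * beta ^+ 2 / 16) * y ^+ 2
    + (- (27 / 2 * beta ^+ 2 * c)) * y + (- (27 * beta ^+ 2 * c ^+ 2)).
  by rewrite horner_rdisc; ring.
by rewrite !cubic => y12 root1 root2 y; rewrite cubic (cubic_factor2 y12 root1 root2).
Qed.

Lemma rdisc_root_left : 0 < c -> 0 < beta -> exists y1, [/\ - (4 * c) < y1 < 0, G y1 = 0 &
  forall y, - (4 * c) <= y <= 0 -> (y < y1 -> 0 < G y) /\ (y1 < y -> G y < 0)].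
Proof.
move=> c_gt0 beta_gt0.
have sgn : G (- (4 * c)) * G 0 < 0 by rewrite pmulr_rlt0 ?rdisc0_lt0 ?rdisc_m4c_gt0.
have [|y1 /[!in_itv]/= /andP[lo hi] /rootP Gy1] := poly_ivtoo _ sgn; first by lra.
exists y1; split=> //; first by rewrite lo hi.
by move=> y /andP[ylo yhi]; split=> lt; rewrite -Gy1; apply: rdisc_decr => //; lra.
Qed.

Lemma rdisc_root_right : 0 < c -> 4 * c < beta ->
  exists2 y2, 0 < y2 < 4 * beta - 4 * c & G y2 = 0.
Proof.
move=> c_gt0 lt4c; have beta_gt0 : 0 < beta by lra.
have sgn : G 0 * G (4 * beta - 4 * c) < 0 by rewrite pmulr_llt0 ?rdisc0_lt0 ?rdisc_4b_gt0.
have [|y2 /[!in_itv]/= /andP[lo hi] /rootP Gy2] := poly_ivtoo _ sgn; first by lra.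
by exists y2; rewrite ?lo.
Qed.

Lemma rdisc_one_root : 0 < beta -> beta < 4 * c -> exists y1,
  [/\ - (4 * c) < y1 < 0, G y1 = 0,
      forall y, - (4 * c) <= y -> y < y1 -> 0 < G y & forall y, y1 < y -> G y < 0].
Proof.
move=> beta_gt0 lt4c; have c_gt0 : 0 < c by lra.
have [y1 [/andP[lo hi] Gy1 sgn]] := rdisc_root_left c_gt0 beta_gt0.
exists y1; split=> //; first by rewrite lo hi.
  by move=> y ylo lt; apply: (sgn y _).1 => //; rewrite ylo; lra.
move=> y lt; have [y_le0 | y_gt0] := lerP y 0; last exact: rdisc_neg_lt4c.
by apply: (sgn y _).2 => //; rewrite y_le0 andbT; lra.
Qed.

Lemma rdisc_two_roots : 0 < c -> 8 * c <= beta -> exists y1 y2 (L : R -> R),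
  [/\ - (4 * c) < y1 < 0, 0 < y2 <= 4 * beta - 4 * c,
      forall y, - (4 * c) <= y -> 0 < L y & forall y, G y = (y - y1) * (y - y2) * L y].
Proof.
move=> c_gt0 ge8c; have beta_gt0 : 0 < beta by lra.
have [y1 [/andP[lo1 hi1] Gy1 _]] := rdisc_root_left c_gt0 beta_gt0.
have [|y2 /andP[lo2 hi2] Gy2] := rdisc_root_right c_gt0; first by lra.
have y12 : y1 != y2 by rewrite lt_eqF //; lra.
have GE := rdisc_factor2 y12 Gy1 Gy2.
pose L y := (beta / 2 - 4 * c) * y
  + (18 * beta * c - 27 * beta ^+ 2 / 16 + (beta / 2 - 4 * c) * (y1 + y2)).
exists y1, y2, L; split=> //; [by rewrite lo1 hi1 | by rewrite lo2 ltW |].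
have L_m4c : 0 < L (- (4 * c)).
  have p : 0 < (- (4 * c) - y1) * (- (4 * c) - y2) by rewrite nmulr_rgt0; lra.
  by rewrite -(pmulr_rgt0 _ p) -GE rdisc_m4c_gt0.
by move=> y ylo; rewrite /L in L_m4c *; nra.
Qed.

Lemma rdisc_three_roots : 0 < c -> 4 * c <= beta -> beta < 8 * c -> exists A y1 y2 y3,
  [/\ A < 0, - (4 * c) < y1 < 0, 0 < y2 <= 4 * beta - 4 * c, 4 * beta - 4 * c <= y3
    & forall y, G y = A * ((y - y1) * (y - y2) * (y - y3))].
Proof.
move=> c_gt0 ge4c lt8c; have beta_gt0 : 0 < beta by lra.
have [eq4c | ne4c] := eqVneq beta (4 * c).
  exists (- (2 * c)), (- (3 * c / 2)), (12 * c), (12 * c); rewrite eq4c.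
  by split=> [||||y]; rewrite ?rdisc_4c; try (apply/andP; split); try lra; field.
have gt4c : 4 * c < beta by rewrite lt_neqAle eq_sym ne4c.
have [y1 [/andP[lo1 hi1] Gy1 _]] := rdisc_root_left c_gt0 beta_gt0.
have [y2 /andP[lo2 hi2] Gy2] := rdisc_root_right c_gt0 gt4c.
have y12 : y1 != y2 by rewrite lt_eqF //; lra.
have GE := rdisc_factor2 y12 Gy1 Gy2.
set A := beta / 2 - 4 * c in GE; set e := 18 * beta * c - _ + A * (y1 + y2) in GE.
have A_lt0 : A < 0 by rewrite /A; lra.
have LE y : A * y + e = A * (y - - e / A) by field; rewrite lt_eqF.
exists A, y1, y2, (- e / A); split=> //; [by rewrite lo1 hi1 | by rewrite lo2 ltW | |].
- have p : 0 < (4 * beta - 4 * c - y1) * (4 * beta - 4 * c - y2) by rewrite mulr_gt0 //; lra.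
  have : 0 < A * (4 * beta - 4 * c - - e / A).
    by rewrite -(pmulr_rgt0 _ p) -LE -GE rdisc_4b_gt0.
  by rewrite nmulr_rgt0 // subr_lt0 => /ltW.
- by move=> y; rewrite GE LE; ring.
Qed.

End ReducedDiscriminant.

Section ShiftedSquare.
Context {R : rcfType}.
Implicit Types k x y c beta d : R.

Lemma ler_sqr_shift k [x y] : 0 <= x -> 0 <= y -> (x ^+ 2 - k <= y ^+ 2 - k) = (x <= y).
Proof. by move=> x0 y0; rewrite lerD2r ler_sqr. Qed.

Lemma ltr_sqr_shift k [x y] : 0 <= x -> 0 <= y -> (x ^+ 2 - k < y ^+ 2 - k) = (x < y).
Proof. by move=> x0 y0; rewrite ltrD2r ltr_sqr. Qed.

Lemma eqr_sqr_shift k [x y] : 0 <= x -> 0 <= y -> (x ^+ 2 - k == y ^+ 2 - k) = (x == y).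
Proof. by move=> x0 y0; rewrite !eq_le !ler_sqr_shift. Qed.

Lemma sqr_shift_ge k x : - k <= x ^+ 2 - k.
Proof. by rewrite lerBrDr addrC subrr sqr_ge0. Qed.

Lemma sqr_shift_onto [k y] : - k <= y -> exists2 x, 0 <= x & y = x ^+ 2 - k.
Proof.
by move=> hy; exists (Num.sqrt (y + k)); rewrite ?sqrtr_ge0 // sqr_sqrtr ?addrK //; lra.
Qed.

Lemma sqr_shift_2sqrt k [x] : 0 <= x -> (2 * Num.sqrt x) ^+ 2 - k = 4 * x - k.
Proof. by move=> x0; rewrite exprMn sqr_sqrtr // -natrX. Qed.

Lemma sqr_shift_bounds_c [c d] : 0 <= c -> 0 <= d ->
  (0 < d < 2 * Num.sqrt c) = (- (4 * c) < d ^+ 2 - 4 * c < 0).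
Proof.
move=> c0 d0; have s0 : 0 <= 2 * Num.sqrt c by rewrite mulr_ge0 ?sqrtr_ge0.
rewrite -(ltr_sqr_shift (4 * c) (lexx 0) d0) -(ltr_sqr_shift (4 * c) d0 s0).
by rewrite sqr_shift_2sqrt // expr0n /= sub0r subrr.
Qed.

Lemma sqr_shift_bounds_beta [c beta d] : 0 <= c -> 0 <= beta -> 0 <= d ->
  (2 * Num.sqrt c < d <= 2 * Num.sqrt beta) = (0 < d ^+ 2 - 4 * c <= 4 * beta - 4 * c).
Proof.
move=> c0 b0 d0; have sc0 : 0 <= 2 * Num.sqrt c by rewrite mulr_ge0 ?sqrtr_ge0.
have sb0 : 0 <= 2 * Num.sqrt beta by rewrite mulr_ge0 ?sqrtr_ge0.
rewrite -(ltr_sqr_shift (4 * c) sc0 d0) -(ler_sqr_shift (4 * c) d0 sb0).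
by rewrite !sqr_shift_2sqrt // subrr.
Qed.

End ShiftedSquare.

Section QbetaByReducedDiscriminant.
Context {R : rcfType} {c beta : R}.
Local Notation G := (horner (rdisc c beta)).
Local Notation n d := (nreal_roots (qbeta c d beta)).

Lemma Delta_q_eq0 (d : R) : 0 < beta -> (Delta_q c beta d == 0) = (G (d ^+ 2 - 4 * c) == 0).
Proof. by move=> beta_gt0; rewrite Delta_qE mulf_eq0 sqrf_eq0 gt_eqF. Qed.

Lemma nreal_roots_qbeta_rdisc [d : R] : 0 < d -> 0 < beta ->
  [/\ d ^+ 2 - 4 * c < 0 -> 0 < G (d ^+ 2 - 4 * c) -> n d = 0%N,
      d ^+ 2 - 4 * c < 0 -> G (d ^+ 2 - 4 * c) <= 0 -> n d = 2%N,
      G (d ^+ 2 - 4 * c) < 0 -> n d = 2%N &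
      0 < d ^+ 2 - 4 * c -> 0 <= G (d ^+ 2 - 4 * c) -> n d = 4%N].
Proof.
move=> d_gt0 beta_gt0; have b2_gt0 : 0 < beta ^+ 2 by rewrite exprn_gt0.
have [n0 n2 n2' n4] := nreal_roots_qbeta_disc c _ _ d_gt0 beta_gt0.
rewrite Delta_qE pmulr_rgt0 // -subr_lt0 in n0.
rewrite Delta_qE pmulr_rle0 // -subr_lt0 in n2.
rewrite Delta_qE pmulr_rlt0 // in n2'.
rewrite Delta_qE pmulr_rge0 // -subr_gt0 in n4.
by split.
Qed.

Lemma nreal_roots_qbeta_two_roots [d y1 y2 : R] (L : R -> R) : 0 < d -> 0 < beta ->
  y1 < 0 < y2 -> (forall y, - (4 * c) <= y -> 0 < L y) ->
  (forall y, G y = (y - y1) * (y - y2) * L y) ->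
  let y := d ^+ 2 - 4 * c in
  [/\ y < y1 -> n d = 0%N, y2 <= y -> n d = 4%N & y1 <= y < y2 -> n d = 2%N].
Proof.
move=> d_gt0 beta_gt0 /andP[y1_lt0 y2_gt0] L_gt0 GE y.
have [n0 n2 n2' n4] := nreal_roots_qbeta_rdisc d_gt0 beta_gt0.
have L_pos := L_gt0 _ (sqr_shift_ge (4 * c) d).
rewrite GE -/y in n0 n2 n2' n4 L_pos.
split=> [lt1 | le2 | /andP[le1 lt2]].
- by apply: n0; [lra | rewrite (pmulr_lgt0 _ L_pos); nra].
- by apply: n4; [lra | rewrite (pmulr_lge0 _ L_pos); nra].
have [y_lt0 | y_ge0] := ltP y 0.
  by apply: n2 => //; rewrite (pmulr_lle0 _ L_pos); nra.
by apply: n2'; rewrite (pmulr_llt0 _ L_pos); nra.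
Qed.

Lemma nreal_roots_qbeta_three_roots [d A y1 y2 y3 : R] : 0 < d -> 0 < beta -> A < 0 ->
  y1 < 0 < y2 -> y2 <= y3 -> (forall y, G y = A * ((y - y1) * (y - y2) * (y - y3))) ->
  let y := d ^+ 2 - 4 * c in
  [/\ y < y1 -> n d = 0%N, y2 <= y <= y3 -> n d = 4%N &
      (y1 <= y < y2) || (y3 < y) -> n d = 2%N].
Proof.
move=> d_gt0 beta_gt0 A_lt0 /andP[y1_lt0 y2_gt0] y23 GE y.
have [n0 n2 n2' n4] := nreal_roots_qbeta_rdisc d_gt0 beta_gt0.
rewrite GE -/y in n0 n2 n2' n4.
split=> [lt1 | /andP[le2 le3] | /orP[/andP[le1 lt2] | lt3]].
- apply: n0; first by lra.
  have p : 0 < (y - y1) * (y - y2) by nra.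
  by rewrite (nmulr_rgt0 _ A_lt0) (pmulr_rlt0 _ p); lra.
- apply: n4; first by lra.
  have p : 0 <= (y - y1) * (y - y2) by nra.
  by rewrite (nmulr_rge0 _ A_lt0); apply: mulr_ge0_le0 p _; lra.
- have [y_lt0 | y_ge0] := ltP y 0.
    apply: n2 => //; rewrite (nmulr_rle0 _ A_lt0); apply: mulr_le0; last by lra.
    by apply: mulr_ge0_le0; lra.
  have p : (y - y1) * (y - y2) < 0 by nra.
  by apply: n2'; rewrite (nmulr_rlt0 _ A_lt0) (nmulr_rgt0 _ p); lra.
- by apply: n2'; rewrite (nmulr_rlt0 _ A_lt0); apply: mulr_gt0; [apply: mulr_gt0 |]; lra.
Qed.

End QbetaByReducedDiscriminant.

Section QbetaRegimes.
Context {R : rcfType}.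
Implicit Types c beta d : R.

Lemma qbeta_one_zero c beta : 0 < beta -> beta < 4 * c ->
  exists d1 : R,
    [/\ 0 < d1 < 2 * Num.sqrt c,
        (forall d, 0 <= d -> (Delta_q c beta d == 0) = (d == d1)) &
        forall d, 0 < d ->
          (d < d1 -> nreal_roots (qbeta c d beta) = 0%N) /\
          (d1 <= d -> nreal_roots (qbeta c d beta) = 2%N)].
Proof.
move=> beta_gt0 lt4c; have c_ge0 : 0 <= c by lra.
have [y1 [y1_in Gy1 G_pos G_neg]] := rdisc_one_root beta_gt0 lt4c.
have [d1 d1_ge0 y1E] := sqr_shift_onto (ltW (andP y1_in).1); subst y1.
exists d1; split; first by rewrite sqr_shift_bounds_c.
- move=> d d_ge0; rewrite Delta_q_eq0 // -(eqr_sqr_shift (4 * c) d_ge0 d1_ge0).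
  have := sqr_shift_ge (4 * c) d.
  case: (ltgtP (d ^+ 2 - 4 * c) (d1 ^+ 2 - 4 * c)) => [lt | gt | ->] y_ge.
  + by rewrite gt_eqF // G_pos.
  + by rewrite lt_eqF // G_neg.
  + by rewrite Gy1 !eqxx.
move=> d d_gt0; have d_ge0 := ltW d_gt0.
have [n0 n2 n2' _] := nreal_roots_qbeta_rdisc (c := c) d_gt0 beta_gt0.
rewrite -(ltr_sqr_shift (4 * c) d_ge0 d1_ge0) -(ler_sqr_shift (4 * c) d1_ge0 d_ge0).
case/andP: y1_in => y1_gt y1_lt0; split=> [lt | ].
  by apply: n0; [lra | apply: G_pos => //; exact: sqr_shift_ge].
rewrite le_eqVlt => /orP[/eqP eq1 | lt]; first by apply: n2; rewrite -eq1 ?Gy1.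
by apply: n2'; apply: G_neg.
Qed.

Lemma qbeta_three_zeros c beta : 0 < beta -> 4 * c <= beta < 8 * c ->
  exists d1 d2 d3 : R,
    [/\ 0 < d1 < 2 * Num.sqrt c,
        2 * Num.sqrt c < d2 <= 2 * Num.sqrt beta,
        2 * Num.sqrt beta <= d3,
        (forall d, 0 <= d ->
           (Delta_q c beta d == 0) = [|| d == d1, d == d2 | d == d3]) &
        forall d, 0 < d ->
          [/\ d < d1 -> nreal_roots (qbeta c d beta) = 0%N,
              d2 <= d <= d3 -> nreal_roots (qbeta c d beta) = 4%N &
              (d1 <= d < d2) || (d3 < d) -> nreal_roots (qbeta c d beta) = 2%N]].
Proof.
move=> beta_gt0 /andP[ge4c lt8c]; have c_gt0 : 0 < c by lra.
have [A [y1 [y2 [y3 [A_lt0 y1_in y2_in y3_ge GE]]]]] := rdisc_three_roots c_gt0 ge4c lt8c.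
have [/andP[y1_gt y1_lt0] /andP[y2_gt0 y2_le]] := (y1_in, y2_in).
have [d1 d1_ge0 y1E] := sqr_shift_onto (ltW y1_gt).
have [|d2 d2_ge0 y2E] := @sqr_shift_onto _ (4 * c) y2; first by lra.
have [|d3 d3_ge0 y3E] := @sqr_shift_onto _ (4 * c) y3; first by lra.
subst y1 y2 y3; have sb_ge0 : 0 <= 2 * Num.sqrt beta by rewrite mulr_ge0 ?sqrtr_ge0.
exists d1, d2, d3; split.
- by rewrite (sqr_shift_bounds_c (ltW c_gt0) d1_ge0).
- by rewrite (sqr_shift_bounds_beta (ltW c_gt0) (ltW beta_gt0) d2_ge0).
- by rewrite -(ler_sqr_shift (4 * c) sb_ge0 d3_ge0) (sqr_shift_2sqrt _ (ltW beta_gt0)).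
- move=> d d_ge0; rewrite Delta_q_eq0 // GE mulf_eq0 (lt_eqF A_lt0) /= !mulf_eq0 !subr_eq0.
  by rewrite !(eqr_sqr_shift (4 * c) d_ge0) // -orbA.
move=> d d_gt0; have d_ge0 := ltW d_gt0.
have /= [] := nreal_roots_qbeta_three_roots d_gt0 beta_gt0 A_lt0 _ _ GE.
- by rewrite y1_lt0 y2_gt0.
- by lra.
rewrite !(ltr_sqr_shift (4 * c) d_ge0) // !(ltr_sqr_shift (4 * c) _ d_ge0) //.
by rewrite !(ler_sqr_shift (4 * c) d_ge0) // !(ler_sqr_shift (4 * c) _ d_ge0).
Qed.

Lemma qbeta_two_zeros c beta : 0 < 8 * c <= beta ->
  exists d1 d2 : R,
    [/\ 0 < d1 < 2 * Num.sqrt c,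
        2 * Num.sqrt c < d2 <= 2 * Num.sqrt beta,
        (forall d, 0 <= d -> (Delta_q c beta d == 0) = (d == d1) || (d == d2)) &
        forall d, 0 < d ->
          [/\ d < d1 -> nreal_roots (qbeta c d beta) = 0%N,
              d2 <= d -> nreal_roots (qbeta c d beta) = 4%N &
              d1 <= d < d2 -> nreal_roots (qbeta c d beta) = 2%N]].
Proof.
move=> /andP[c8_gt0 ge8c]; have c_gt0 : 0 < c by lra.
have beta_gt0 : 0 < beta by lra.
have [y1 [y2 [L [y1_in y2_in L_gt0 GE]]]] := rdisc_two_roots c_gt0 ge8c.
have [/andP[y1_gt y1_lt0] /andP[y2_gt0 y2_le]] := (y1_in, y2_in).
have [d1 d1_ge0 y1E] := sqr_shift_onto (ltW y1_gt).
have [|d2 d2_ge0 y2E] := @sqr_shift_onto _ (4 * c) y2; first by lra.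
subst y1 y2; exists d1, d2; split.
- by rewrite (sqr_shift_bounds_c (ltW c_gt0) d1_ge0).
- by rewrite (sqr_shift_bounds_beta (ltW c_gt0) (ltW beta_gt0) d2_ge0).
- move=> d d_ge0; rewrite Delta_q_eq0 // GE !mulf_eq0 (gt_eqF (L_gt0 _ (sqr_shift_ge _ _))).
  by rewrite orbF !subr_eq0 !(eqr_sqr_shift (4 * c) d_ge0).
move=> d d_gt0; have d_ge0 := ltW d_gt0.
have /= [] := nreal_roots_qbeta_two_roots L d_gt0 beta_gt0 _ L_gt0 GE.
  by rewrite y1_lt0 y2_gt0.
rewrite (ltr_sqr_shift (4 * c) d_ge0) // !(ler_sqr_shift (4 * c) _ d_ge0) //.
by rewrite (ltr_sqr_shift (4 * c) d_ge0).
Qed.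

Lemma qbeta_c0 beta : 0 < beta ->
  let d2 := Num.sqrt (27 * beta / 8) in
  (forall d, 0 <= d -> (Delta_q 0 beta d == 0) = (d == 0) || (d == d2)) /\
  (forall d, 0 < d ->
     (d2 <= d -> nreal_roots (qbeta 0 d beta) = 4%N) /\
     (d < d2 -> nreal_roots (qbeta 0 d beta) = 2%N)).
Proof.
move=> beta_gt0 d2; have d2_ge0 : 0 <= d2 by rewrite sqrtr_ge0.
have GE y : (rdisc 0 beta).[y] = beta / 2 * (y ^+ 2 * (y - d2 ^+ 2)).
  by rewrite rdisc_c0 sqr_sqrtr; [field | lra].
have b2_gt0 : 0 < beta / 2 by lra.
split=> [d d_ge0 | d d_gt0].
  rewrite Delta_q_eq0 // mulr0 subr0 GE mulf_eq0 (gt_eqF b2_gt0) mulf_eq0 !sqrf_eq0.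
  by rewrite subr_eq0 /= eqrXn2.
have [_ _ n2' n4] := nreal_roots_qbeta_rdisc (c := 0) d_gt0 beta_gt0.
rewrite mulr0 subr0 GE (pmulr_rlt0 _ b2_gt0) (pmulr_rge0 _ b2_gt0) in n2' n4.
have d4_gt0 : 0 < d ^+ 2 ^+ 2 by rewrite !exprn_gt0.
rewrite (pmulr_rlt0 _ d4_gt0) (pmulr_rge0 _ d4_gt0) !subr_lt0 !subr_ge0 in n2' n4.
have d_ge0 : 0 <= d by exact: ltW.
split=> [le | lt]; first by apply: n4; [exact: exprn_gt0 | rewrite ler_sqr ?nnegrE].
by apply: n2'; rewrite ltr_sqr ?nnegrE.
Qed.

End QbetaRegimes.

Theorem lemma3p4 (R : realType) (c beta : R) (hc : 0 <= c) (hbeta : 0 < beta) :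
  (* (i) beta < 4c : unique non-negative zero d1; d2 = d3 = oo *)
  (beta < 4 * c ->
   exists d1 : R,
     [/\ 0 < d1 < 2 * Num.sqrt c,
         (forall d, 0 <= d -> (Delta_q c beta d == 0) = (d == d1)) &
         forall d, 0 < d ->
           (d < d1 -> nreal_roots (qbeta c d beta) = 0%N) /\
           (d1 <= d -> nreal_roots (qbeta c d beta) = 2%N)]) /\
  (* (ii) 4c <= beta < 8c : zeros d1, d2, d3 *)
  (4 * c <= beta < 8 * c ->
   exists d1 d2 d3 : R,
     [/\ 0 < d1 < 2 * Num.sqrt c,
         2 * Num.sqrt c < d2 <= 2 * Num.sqrt beta,
         2 * Num.sqrt beta <= d3,
         (forall d, 0 <= d ->
            (Delta_q c beta d == 0) = [|| d == d1, d == d2 | d == d3]) &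
         forall d, 0 < d ->
           [/\ d < d1 -> nreal_roots (qbeta c d beta) = 0%N,
               d2 <= d <= d3 -> nreal_roots (qbeta c d beta) = 4%N &
               (d1 <= d < d2) || (d3 < d) ->
                 nreal_roots (qbeta c d beta) = 2%N]]) /\
  (* (iii) beta >= 8c > 0 : zeros d1, d2; d3 = oo *)
  (0 < 8 * c <= beta ->
   exists d1 d2 : R,
     [/\ 0 < d1 < 2 * Num.sqrt c,
         2 * Num.sqrt c < d2 <= 2 * Num.sqrt beta,
         (forall d, 0 <= d ->
            (Delta_q c beta d == 0) = (d == d1) || (d == d2)) &
         forall d, 0 < d ->
           [/\ d < d1 -> nreal_roots (qbeta c d beta) = 0%N,
               d2 <= d -> nreal_roots (qbeta c d beta) = 4%N &
               d1 <= d < d2 -> nreal_roots (qbeta c d beta) = 2%N]]) /\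
  (* (iv) c = 0 : zeros d1 = 0, d2 = sqrt(27 beta / 8); d3 = oo *)
  (c = 0 ->
   let d2 := Num.sqrt (27 * beta / 8) in
     (forall d, 0 <= d ->
        (Delta_q c beta d == 0) = (d == 0) || (d == d2)) /\
     (forall d, 0 < d ->
        (d2 <= d -> nreal_roots (qbeta c d beta) = 4%N) /\
        (d < d2 -> nreal_roots (qbeta c d beta) = 2%N))).
Proof.
(* [hc] is not needed: each case hypothesis already fixes the sign of c. *)
split; first exact: qbeta_one_zero.
split; first exact: qbeta_three_zeros.
split; first by move=> /qbeta_two_zeros.
by move=> ->; exact: qbeta_c0.
Qed.
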